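(* Let $k\ge 0$ be an integer and let $a,b,c\in\mathbb{C}$ be such that no lower parameter below is a nonpositive integer (in particular $b,c\notin\{0,-1,-2,\dots\}$ and $1+a-b,1+a-c\notin\{0,-1,-2,\dots\}$). Define $$Q_k^{(2)}(n;a;b,c)={}_3F_2\!\left[\begin{matrix}-n,\ n+a,\ -k\\ b,\ c\end{matrix}\,\Big|\,1\right]=\sum_{j=0}^{k}\frac{(-n)_j(n+a)_j(-k)_j}{j!\,(b)_j(c)_j},$$ which is a polynomial of degree $2k$ in $n$ (and of degree $k$ in $\lambda=n(n+a)$). Then, as an identity of analytic functions in a neighborhood of $x=0$, $${}_3F_2\!\left[\begin{matrix}\tfrac a2,\ \tfrac12+\tfrac a2,\ 1-k+a-b-c\\ 1+a-b,\ 1+a-c\end{matrix}\,\Big|\,-\frac{4x}{(1-x)^2}\right]=(1-x)^a\sum_{n=0}^\infty\frac{(a)_n(b)_n(c)_n}{n!\,(1+a-b)_n(1+a-c)_n}\,Q_k^{(2)}(n;a;b,c)\,x^n .$$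
   Context: $(c)_n=c(c+1)\cdots(c+n-1)$, $(c)_0=1$, denotes the Pochhammer symbol. ${}_{p}F_{q}\!\left[\begin{smallmatrix}a_1,\dots,a_p\\ b_1,\dots,b_q\end{smallmatrix}\,\big|\,x\right]=\sum_{n\ge0}\frac{(a_1)_n\cdots(a_p)_n}{n!(b_1)_n\cdots(b_q)_n}x^n$ is the generalized hypergeometric series. Equivalently, the right-hand series equals a ${}_{3+2k}F_{2+2k}$ with extra upper parameters $1+\xi_i$ and lower parameters $\xi_i$, where $\xi_1,\dots,\xi_{2k}$ are the negated roots of $Q_k^{(2)}$. *)

(* Formal power series are represented by coefficient
   sequences nat -> C over a numeric algebraically closed field C
   (the MathComp abstraction of the complex numbers). *)
From HB Require Import structures.
From mathcomp Require Import all_boot all_order all_algebra.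
Set Implicit Arguments. Unset Strict Implicit. Unset Printing Implicit Defensive.
Import Order.TTheory GRing.Theory Num.Theory.
Local Open Scope ring_scope.

Section Defs.
Variable R : fieldType.

Definition poch (x : R) (n : nat) : R := \prod_(i < n) (x + i%:R).

Definition hyp_coef (us ls : seq R) (n : nat) : R :=
  (\prod_(u <- us) poch u n) / (n`!%:R * \prod_(l <- ls) poch l n).

Definition Q2 (k n : nat) (a b c : R) : R :=
  \sum_(j < k.+1) hyp_coef [:: - n%:R; n%:R + a; - k%:R] [:: b; c] j.

Definition fps := nat -> R.
Definition fps_one : fps := fun n => (n == 0%N)%:R.
Definition fps_mul (f g : fps) : fps :=
  fun n => \sum_(i < n.+1) f i * g (n - i)%N.
Definition fps_exp (f : fps) (m : nat) : fps := iter m (fps_mul f) fps_one.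
(* composition F(g(x)), meaningful when g has zero constant term *)
Definition fps_comp (F g : fps) : fps :=
  fun N => \sum_(m < N.+1) F m * fps_exp g m N.
Definition fps_1mX_pow (s : R) : fps := fun j => poch (- s) j / j`!%:R.
Definition fps_X : fps := fun n => (n == 1%N)%:R.
Definition fps_scale (c : R) (f : fps) : fps := fun n => c * f n.
Definition fps_hyp (us ls : seq R) : fps := hyp_coef us ls.
End Defs.

From HB Require Import structures.
From mathcomp Require Import all_boot all_order all_algebra.
From mathcomp Require Import ring zify.
From Stdlib Require Import FunctionalExtensionality.
Import Order.TTheory GRing.Theory Num.Theory.
Set Implicit Arguments. Unset Strict Implicit. Unset Printing Implicit Defensive.
Local Open Scope ring_scope.

(* Multiply both sides by (1 - x)^(-a). Since (-4x/(1-x)^2)^m (1-x)^(-a)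
   = (-4)^m x^m (1-x)^(-a-2m), the N-th coefficient of the left-hand side becomes
   a finite sum over m. Duplication turns (a/2)_m ((1+a)/2)_m 4^m into (a)_(2m);
   Chu-Vandermonde splits (1-k+a-b-c)_m / m! into (-k)_i/i! and
   (1+a-b-c)_(m-i)/(m-i)!; after exchanging the sums, the inner sum is a balanced
   terminating 3F2, which the Pfaff-Saalschutz theorem evaluates to the i-th term
   of Q_k^(2)(N) times the N-th coefficient of the right-hand series. *)

Section Pochhammer.
Variable R : fieldType.
Implicit Types (x : R) (m n : nat).

Lemma poch0 x : poch x 0 = 1.
Proof. by rewrite /poch big_ord0. Qed.

Lemma pochS x n : poch x n.+1 = poch x n * (x + n%:R).
Proof. by rewrite /poch big_ord_recr. Qed.

Lemma pochSl x n : poch x n.+1 = x * poch (x + 1) n.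
Proof.
rewrite /poch big_ord_recl /= addr0; congr (_ * _).
by apply: eq_bigr => i _; rewrite /bump /= add1n -nat1r addrA.
Qed.

Lemma pochD x m n : poch x (m + n) = poch x m * poch (x + m%:R) n.
Proof.
rewrite /poch big_split_ord /=; congr (_ * _).
by apply: eq_bigr => i _; rewrite natrD addrA.
Qed.

Lemma poch_oppn m n : poch (- m%:R) n = (-1) ^+ n * (m ^_ n)%:R :> R.
Proof.
elim: n => [|n IH]; first by rewrite poch0 ffactn0 mulr1.
rewrite pochS IH ffactnSr exprS.
have [nm | mn] := leqP n m; first by rewrite natrM natrB //; ring.
by rewrite ffact_small // mul0n !mulr0 mul0r.
Qed.

Lemma poch_oppn_eq0 m n : (m < n)%N -> poch (- m%:R) n = 0 :> R.
Proof. by move=> mn; rewrite poch_oppn ffact_small // mulr0. Qed.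

Lemma poch_neq0 x n : (forall m, x != - m%:R) -> poch x n != 0.
Proof.
move=> hx; apply/prodf_neq0 => i _.
by rewrite addr_eq0; apply: hx.
Qed.

Lemma notnpos_addn x n : (forall m, x != - m%:R) -> forall m, x + n%:R != - m%:R.
Proof.
move=> hx m; apply: contra (hx (m + n)%N) => /eqP E.
by rewrite natrD opprD -E addrK.
Qed.

End Pochhammer.

Section PochhammerNum.
Variable R : numFieldType.
Implicit Types (x : R) (m n : nat).

Lemma natr_fact_neq0 n : (n`!%:R : R) != 0.
Proof. by rewrite pnatr_eq0 -lt0n fact_gt0. Qed.

Lemma poch_oppn_fact m n : (n <= m)%N ->
  poch (- m%:R) n = (-1) ^+ n * m`!%:R / (m - n)`!%:R :> R.
Proof.
move=> nm; rewrite poch_oppn -(ffact_fact nm) natrM mulrA mulfK //.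
exact: natr_fact_neq0.
Qed.

Lemma poch_duplication x m :
  poch (x / 2%:R) m * poch (2%:R^-1 + x / 2%:R) m * 4%:R ^+ m = poch x (2 * m)%N.
Proof.
elim: m => [|m IH]; first by rewrite muln0 !poch0 expr0 !mulr1.
rewrite mulnS !add2n !pochS -IH exprS.
have h2 : (2%:R : R) != 0 by rewrite pnatr_eq0.
by rewrite -!natr1 natrM; field.
Qed.

End PochhammerNum.

Section ChuVandermonde.
Variable R : numFieldType.
Implicit Types (x y : R) (n : nat).

Definition poch_frac x n : R := poch x n / n`!%:R.

Lemma poch_frac0 x : poch_frac x 0 = 1.
Proof. by rewrite /poch_frac poch0 divr1. Qed.

Lemma poch_fracS x n : poch_frac x n.+1 * n.+1%:R = poch_frac x n * (x + n%:R).
Proof.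
rewrite /poch_frac pochS factS natrM.
have hn := @natr_fact_neq0 R n.
have hn1 : (n.+1%:R : R) != 0 by rewrite pnatr_eq0.
by field; rewrite hn nat1r hn1.
Qed.

Lemma chu_vandermonde x y n :
  \sum_(i < n.+1) poch_frac x i * poch_frac y (n - i) = poch_frac (x + y) n.
Proof.
elim: n => [|n IH]; first by rewrite big_ord1 !poch_frac0 mulr1.
have hn : (n.+1%:R : R) != 0 by rewrite pnatr_eq0.
apply: (mulIf hn); rewrite poch_fracS -IH mulr_suml.
have split_n1 (i : 'I_n.+2) : poch_frac x i * poch_frac y (n.+1 - i) * n.+1%:R =
    i%:R * poch_frac x i * poch_frac y (n.+1 - i)
    + poch_frac x i * (poch_frac y (n.+1 - i) * (n.+1 - i)%:R).
  by rewrite (natrB _ (ltn_ord i)); ring.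
rewrite (eq_bigr _ (fun i _ => split_n1 i)) big_split /=.
rewrite [X in X + _]big_ord_recl [X in _ + X]big_ord_recr /= subnn.
rewrite !mul0r !mulr0 add0r addr0 mulr_suml -big_split /=.
apply: eq_bigr => i _; rewrite /bump /= add1n subSS.
have hi : (i <= n)%N by rewrite -ltnS.
rewrite [_ * poch_frac x _]mulrC poch_fracS subSn // poch_fracS natrB //; ring.
Qed.

End ChuVandermonde.

Section Saalschutz.
Variable R : numFieldType.
Variables a p q : R.
Hypothesis hp : forall m : nat, p != - m%:R.
Hypothesis hq : forall m : nat, q != - m%:R.

Let e := p + q - 1 - a.

(* [(a)_M] times the [l]-th term of the balanced series 3F2[-M, a+M, e; p, q | 1]. *)
Definition saal_term (M l : nat) : R :=
  poch (- M%:R) l * poch a (M + l) * poch e l / (l`!%:R * poch p l * poch q l).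

(* Zeilberger certificate of the first-order recurrence in [M]. *)
Definition saal_cert (M l : nat) : R :=
  - (1 + a + 2%:R * M%:R) / M.+1%:R
  * (poch (- M.+1%:R) l * poch a (M + l) * poch e l)
  * (l%:R * (p + l%:R - 1) * (q + l%:R - 1)) / (l`!%:R * poch p l * poch q l).

Lemma saal_term_telescope M l :
  (p + M%:R) * (q + M%:R) * saal_term M.+1 l
  - (a + M%:R) * (1 + a - p + M%:R) * (1 + a - q + M%:R) * saal_term M l
  = saal_cert M l.+1 - saal_cert M l.
Proof.
have pochM : poch (- M%:R) l = poch (- M.+1%:R) l * (- M.+1%:R + l%:R) / (- M.+1%:R) :> R.
  have hM1 : (- M.+1%:R : R) != 0 by rewrite oppr_eq0 pnatr_eq0.
  by rewrite -pochS pochSl mulrC mulKf // -natr1 opprD addrNK.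
rewrite /saal_term /saal_cert pochM addSn addnS !pochS factS natrM.
have h1 := @natr_fact_neq0 R l.
have h2 : poch p l != 0 by apply: poch_neq0.
have h3 : poch q l != 0 by apply: poch_neq0.
have h4 : p + l%:R != 0 by rewrite addr_eq0.
have h5 : q + l%:R != 0 by rewrite addr_eq0.
have h6 : (M.+1%:R : R) != 0 by rewrite pnatr_eq0.
have h7 : (l.+1%:R : R) != 0 by rewrite pnatr_eq0.
move: h1 h2 h3 h4 h5 h6 h7.
set W := poch (- M.+1%:R) l; set V := poch a (M + l); set E := poch e l.
set F := (l`!%:R : R); set Pp := poch p l; set Pq := poch q l.
rewrite /e -!natr1 !natrD => h1 h2 h3 h4 h5 h6 h7.
by field; rewrite h1 h2 h3 h4 h5 h6 h7.
Qed.

Lemma saal_sum_rec M :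
  (p + M%:R) * (q + M%:R) * \sum_(l < M.+2) saal_term M.+1 l
  = (a + M%:R) * (1 + a - p + M%:R) * (1 + a - q + M%:R)
    * \sum_(l < M.+1) saal_term M l.
Proof.
apply/eqP; rewrite -subr_eq0; apply/eqP.
rewrite [X in _ - _ * X](_ : _ = \sum_(l < M.+2) saal_term M l); last first.
  by rewrite [RHS]big_ord_recr /= /saal_term poch_oppn_eq0 // !mul0r addr0.
rewrite !mulr_sumr -sumrB (eq_bigr (fun l : 'I_M.+2 => saal_cert M l.+1 - saal_cert M l)).
  rewrite -(big_mkord xpredT (fun l => saal_cert M l.+1 - saal_cert M l)) telescope_sumr //.
  by rewrite /saal_cert poch_oppn_eq0 // !(mul0r, mulr0, mulr0n) subr0.
by move=> l _; rewrite saal_term_telescope.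
Qed.

Lemma saalschutz M :
  (\sum_(l < M.+1) saal_term M l) * (poch p M * poch q M)
  = poch a M * poch (1 + a - p) M * poch (1 + a - q) M.
Proof.
elim: M => [|M IH]; first by rewrite big_ord1 /saal_term !poch0 !mulr1 divr1.
have hpM : p + M%:R != 0 by rewrite addr_eq0.
have hqM : q + M%:R != 0 by rewrite addr_eq0.
have -> : \sum_(l < M.+2) saal_term M.+1 l
    = (a + M%:R) * (1 + a - p + M%:R) * (1 + a - q + M%:R)
      * (\sum_(l < M.+1) saal_term M l) / ((p + M%:R) * (q + M%:R)).
  by rewrite -saal_sum_rec; field; rewrite hpM hqM.
rewrite !pochS; move: IH; set S := \sum_(l < M.+1) _ => IH.
transitivity ((S * (poch p M * poch q M)) * ((a + M%:R) * (1 + a - p + M%:R) * (1 + a - q + M%:R))).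
  by field; rewrite hpM hqM.
by rewrite IH; ring.
Qed.

End Saalschutz.

Section Sums.
Variable V : nmodType.

Lemma sum_triangle (F : nat -> nat -> V) N :
  \sum_(m < N.+1) \sum_(i < m.+1) F m i
  = \sum_(i < N.+1) \sum_(l < (N - i).+1) F (i + l)%N i.
Proof.
elim: N => [|N IH]; first by rewrite !big_ord1.
rewrite big_ord_recr /= IH [RHS]big_ord_recr /= subnn big_ord1 addn0.
rewrite [\sum_(i < N.+2) _]big_ord_recr /= addrA; congr (_ + _).
rewrite -big_split /=; apply: eq_bigr => i _.
have hi : (i <= N)%N by rewrite -ltnS.
by rewrite subSn // [RHS]big_ord_recr /= addnS subnKC.
Qed.

Lemma big_ord_widen0 (F : nat -> V) n L : (n <= L)%N ->
  (forall i, (n < i)%N -> F i = 0) -> \sum_(i < n.+1) F i = \sum_(i < L.+1) F i.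
Proof.
move=> nL F0; rewrite (big_ord_widen L.+1 F) // big_mkcond /=.
by apply: eq_bigr => i _; case: ltnP => // /F0 ->.
Qed.

End Sums.

Lemma hyp_coef_3F2 (R : fieldType) (x y z u v : R) n :
  hyp_coef [:: x; y; z] [:: u; v] n
  = poch x n * poch y n * poch z n / (n`!%:R * poch u n * poch v n).
Proof. by rewrite /hyp_coef !big_cons !big_nil !mulr1 !mulrA. Qed.

Section QuadraticTransformationCoefficient.
Variable R : numFieldType.
Variables (k N : nat) (a b c : R).
Hypothesis hb : forall m : nat, b != - m%:R.
Hypothesis hc : forall m : nat, c != - m%:R.
Hypothesis hab : forall m : nat, 1 + a - b != - m%:R.
Hypothesis hac : forall m : nat, 1 + a - c != - m%:R.

Let p := 1 + a - b.
Let q := 1 + a - c.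
Let e := 1 + a - b - c.

Definition split_term (m i : nat) : R :=
  (-1) ^+ m * poch a (N + m) / ((N - m)`!%:R * poch p m * poch q m)
  * (poch_frac (- k%:R) i * poch_frac e (m - i)).

Lemma lhs_term_split m : (m <= N)%N ->
  hyp_coef [:: a / 2%:R; 2%:R^-1 + a / 2%:R; 1 - k%:R + a - b - c] [:: p; q] m
    * ((- 4%:R) ^+ m * poch_frac (a + (2 * m)%N%:R) (N - m))
  = \sum_(i < m.+1) split_term m i.
Proof.
move=> mN; rewrite /split_term -mulr_sumr chu_vandermonde hyp_coef_3F2.
have -> : 1 - k%:R + a - b - c = - k%:R + e by rewrite /e; ring.
have -> : poch a (N + m) = poch (a / 2%:R) m * poch (2%:R^-1 + a / 2%:R) m * 4%:R ^+ m
    * poch (a + (2 * m)%N%:R) (N - m).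
  by rewrite poch_duplication -pochD; congr poch; lia.
rewrite (_ : (- 4%:R) ^+ m = (-1) ^+ m * 4%:R ^+ m :> R); last by rewrite -exprMn mulN1r.
have h1 := @natr_fact_neq0 R m.
have h2 := @natr_fact_neq0 R (N - m).
have h3 : poch p m != 0 by apply: poch_neq0.
have h4 : poch q m != 0 by apply: poch_neq0.
by rewrite /poch_frac; field; rewrite h1 h2 h3 h4.
Qed.

Definition saal_prefactor (i : nat) : R :=
  (-1) ^+ i * poch_frac (- k%:R) i * poch a (2 * i)%N / (poch p i * poch q i * (N - i)`!%:R).

Lemma split_term_saal i l : (i <= N)%N -> (l <= N - i)%N ->
  split_term (i + l) i
  = saal_prefactor i * saal_term (a + (2 * i)%N%:R) (p + i%:R) (q + i%:R) (N - i) l.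
Proof.
move=> iN lNi.
rewrite /split_term /saal_prefactor /saal_term addKn subnDA exprD (pochD p) (pochD q).
rewrite (_ : (N + (i + l) = 2 * i + (N - i + l))%N); last by lia.
rewrite pochD (poch_oppn_fact _ lNi).
have -> : p + i%:R + (q + i%:R) - 1 - (a + (2 * i)%N%:R) = e by rewrite /p /q /e natrM; ring.
have h1 := @natr_fact_neq0 R l.
have h2 := @natr_fact_neq0 R (N - i).
have h3 := @natr_fact_neq0 R (N - i - l).
have h4 := @natr_fact_neq0 R i.
have h5 : poch p i != 0 by apply: poch_neq0.
have h6 : poch q i != 0 by apply: poch_neq0.
have h7 : poch (p + i%:R) l != 0 by apply/poch_neq0/notnpos_addn.
have h8 : poch (q + i%:R) l != 0 by apply/poch_neq0/notnpos_addn.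
by rewrite /poch_frac; field; rewrite h1 h2 h3 h4 h5 h6 h7 h8.
Qed.

Lemma saal_prefactor_sum i : (i <= N)%N ->
  saal_prefactor i
    * \sum_(l < (N - i).+1) saal_term (a + (2 * i)%N%:R) (p + i%:R) (q + i%:R) (N - i) l
  = hyp_coef [:: a; b; c] [:: p; q] N * hyp_coef [:: - N%:R; N%:R + a; - k%:R] [:: b; c] i.
Proof.
move=> iN; set M := (N - i)%N.
have hpi : forall m : nat, p + i%:R != - m%:R by apply: notnpos_addn.
have hqi : forall m : nat, q + i%:R != - m%:R by apply: notnpos_addn.
have hpM : poch (p + i%:R) M != 0 by apply: poch_neq0.
have hqM : poch (q + i%:R) M != 0 by apply: poch_neq0.
have -> : \sum_(l < M.+1) saal_term (a + (2 * i)%N%:R) (p + i%:R) (q + i%:R) M l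
    = poch (a + (2 * i)%N%:R) M * poch (b + i%:R) M * poch (c + i%:R) M
      / (poch (p + i%:R) M * poch (q + i%:R) M).
  have -> : b + i%:R = 1 + (a + (2 * i)%N%:R) - (p + i%:R) by rewrite /p natrM; ring.
  have -> : c + i%:R = 1 + (a + (2 * i)%N%:R) - (q + i%:R) by rewrite /q natrM; ring.
  by rewrite -(saalschutz _ hpi hqi) mulfK ?mulf_neq0.
have Ea : poch a (2 * i)%N * poch (a + (2 * i)%N%:R) M = poch a N * poch (N%:R + a) i.
  by rewrite -pochD (_ : (2 * i + M = N + i)%N) 1?pochD 1?addrC //; lia.
have EN : N = (i + M)%N by rewrite subnKC.
have Ep : poch p N = poch p i * poch (p + i%:R) M by rewrite {1}EN pochD.
have Eq : poch q N = poch q i * poch (q + i%:R) M by rewrite {1}EN pochD.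
have Eb : poch b N = poch b i * poch (b + i%:R) M by rewrite {1}EN pochD.
have Ec : poch c N = poch c i * poch (c + i%:R) M by rewrite {1}EN pochD.
rewrite !hyp_coef_3F2 Ep Eq Eb Ec (poch_oppn_fact _ iN) -/M /saal_prefactor.
have hM := @natr_fact_neq0 R M.
have h1 := @natr_fact_neq0 R i.
have h2 := @natr_fact_neq0 R N.
have h3 : poch p i != 0 by apply: poch_neq0.
have h4 : poch q i != 0 by apply: poch_neq0.
have h5 : poch b i != 0 by apply: poch_neq0.
have h6 : poch c i != 0 by apply: poch_neq0.
transitivity ((poch a (2 * i)%N * poch (a + (2 * i)%N%:R) M) *
  ((-1) ^+ i * poch_frac (- k%:R) i * poch (b + i%:R) M * poch (c + i%:R) M /
   (poch p i * poch q i * M`!%:R * poch (p + i%:R) M * poch (q + i%:R) M))).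
  by field; rewrite h3 h4 hM hpM hqM.
by rewrite Ea /poch_frac; field; rewrite h1 h2 h3 h4 h5 h6 hM hpM hqM.
Qed.

Lemma coef_quad_transform :
  \sum_(m < N.+1)
     hyp_coef [:: a / 2%:R; 2%:R^-1 + a / 2%:R; 1 - k%:R + a - b - c] [:: p; q] m
       * ((- 4%:R) ^+ m * poch_frac (a + (2 * m)%N%:R) (N - m))
  = hyp_coef [:: a; b; c] [:: p; q] N * Q2 k N a b c.
Proof.
rewrite (eq_bigr _ (fun m _ => lhs_term_split (ltnSE (ltn_ord m)))) sum_triangle.
have inner (i : 'I_N.+1) : \sum_(l < (N - i).+1) split_term (i + l) i
    = hyp_coef [:: a; b; c] [:: p; q] N * hyp_coef [:: - N%:R; N%:R + a; - k%:R] [:: b; c] i.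
  have iN : (i <= N)%N by rewrite -ltnS.
  rewrite -saal_prefactor_sum // mulr_sumr; apply: eq_bigr => l _.
  by rewrite split_term_saal // -ltnS.
rewrite (eq_bigr _ (fun i _ => inner i)) -mulr_sumr.
rewrite /Q2 (big_ord_widen0 (leq_maxl N k)) => [|j Nj]; last first.
  by rewrite hyp_coef_3F2 poch_oppn_eq0 // !mul0r.
rewrite [in RHS](big_ord_widen0 (leq_maxr N k)) // => j kj.
by rewrite hyp_coef_3F2 (poch_oppn_eq0 _ kj) !(mul0r, mulr0).
Qed.

End QuadraticTransformationCoefficient.

Section FormalPowerSeries.
Variable R : fieldType.
Implicit Types (f g h : fps R) (c d : R) (m n : nat).

Definition fps_trunc n f : {poly R} := \poly_(i < n.+1) f i.

Lemma coef_fps_truncM f g n j : (j <= n)%N ->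
  (fps_trunc n f * fps_trunc n g)`_j = fps_mul f g j.
Proof.
move=> jn; rewrite coefM /fps_mul; apply: eq_bigr => i _.
have hi : (i < n.+1)%N by apply: leq_trans (ltn_ord i) _.
have hji : (j - i < n.+1)%N by rewrite ltnS (leq_trans (leq_subr _ _)).
by rewrite /fps_trunc !coef_poly hi hji.
Qed.

Lemma fps_mulC f g : fps_mul f g = fps_mul g f.
Proof.
apply: functional_extensionality => n.
by rewrite -!(@coef_fps_truncM _ _ n n) // mulrC.
Qed.

Lemma fps_mulA f g h : fps_mul f (fps_mul g h) = fps_mul (fps_mul f g) h.
Proof.
apply: functional_extensionality => n.
have trunc_coef k i : (i <= n)%N -> (fps_trunc n k)`_i = k i.
  by move=> hi; rewrite coef_poly ltnS hi.
transitivity ((fps_trunc n f * (fps_trunc n g * fps_trunc n h))`_n).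
  rewrite coefM; apply: eq_bigr => i _.
  by rewrite coef_fps_truncM ?leq_subr // trunc_coef // -ltnS.
rewrite mulrA coefM; apply: eq_bigr => i _.
by rewrite coef_fps_truncM ?trunc_coef ?leq_subr // -ltnS.
Qed.

Lemma fps_mul1 f : fps_mul (fps_one R) f = f.
Proof.
apply: functional_extensionality => n.
rewrite /fps_mul big_ord_recl /fps_one mul1r subn0 big1 ?addr0 // => i _.
by rewrite mul0r.
Qed.

Lemma fps_mulZl c f g : fps_mul (fps_scale c f) g = fps_scale c (fps_mul f g).
Proof.
apply: functional_extensionality => n.
by rewrite /fps_mul /fps_scale mulr_sumr; apply: eq_bigr => i _; rewrite mulrA.
Qed.

Lemma fps_mulZr c f g : fps_mul f (fps_scale c g) = fps_scale c (fps_mul f g).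
Proof. by rewrite fps_mulC fps_mulZl fps_mulC. Qed.

Lemma fps_scaleA c d f : fps_scale c (fps_scale d f) = fps_scale (c * d) f.
Proof. by apply: functional_extensionality => n; rewrite /fps_scale mulrA. Qed.

Lemma fps_scale1 f : fps_scale 1 f = f.
Proof. by apply: functional_extensionality => n; rewrite /fps_scale mul1r. Qed.

Definition fps_shift m f : fps R := fun n => if (m <= n)%N then f (n - m)%N else 0.

Lemma fps_shift0 f : fps_shift 0 f = f.
Proof. by apply: functional_extensionality => n; rewrite /fps_shift subn0. Qed.

Lemma fps_shiftD m n f : fps_shift m (fps_shift n f) = fps_shift (m + n) f.
Proof.
apply: functional_extensionality => N; rewrite /fps_shift.
case: (leqP m N) => mN; first by rewrite leq_subRL // subnDA addnC.
by case: leqP => // mnN; exfalso; lia.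
Qed.

Lemma fps_X_shift : fps_X R = fps_shift 1 (fps_one R).
Proof. by apply: functional_extensionality => -[|[|N]]. Qed.

Lemma fps_mul_shiftl m f g : fps_mul (fps_shift m f) g = fps_shift m (fps_mul f g).
Proof.
apply: functional_extensionality => N; rewrite /fps_shift /fps_mul.
case: leqP => mN; last first.
  rewrite big1 // => i _.
  by rewrite leqNgt (leq_trans (ltn_ord i) mN) mul0r.
rewrite -(big_mkord xpredT (fun i => (if (m <= i)%N then f (i - m)%N else 0) * g (N - i)%N)).
rewrite (big_cat_nat _ (n := m)) //=; last by rewrite ltnW.
rewrite big_nat_cond big1 ?add0r => [|i /andP[/andP[_ im] _]]; last first.
  by rewrite leqNgt im mul0r.
rewrite -{1}(add0n m) big_addn subSn // big_mkord; apply: eq_bigr => i _.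
by rewrite leq_addl addnK addnC subnDA.
Qed.

Lemma fps_mul_shiftr m f g : fps_mul f (fps_shift m g) = fps_shift m (fps_mul f g).
Proof. by rewrite fps_mulC fps_mul_shiftl fps_mulC. Qed.

Lemma fps_exp_small g m n : g 0%N = 0 -> (n < m)%N -> fps_exp g m n = 0.
Proof.
move=> g0; elim: m n => [|m IH] n // nm.
rewrite /= {1}/fps_mul big_ord_recl g0 mul0r add0r big1 // => i _.
by rewrite IH ?mulr0 // lift0; have := ltn_ord i; lia.
Qed.

Lemma coef_fps_mul_comp P F g N : g 0%N = 0 ->
  fps_mul P (fps_comp F g) N = \sum_(m < N.+1) F m * fps_mul P (fps_exp g m) N.
Proof.
move=> g0; rewrite /fps_mul /fps_comp.
have widen (i : 'I_N.+1) : \sum_(m < (N - i).+1) F m * fps_exp g m (N - i)%N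
    = \sum_(m < N.+1) F m * fps_exp g m (N - i)%N.
  rewrite (big_ord_widen N.+1 (fun m => F m * fps_exp g m (N - i)%N)) ?ltnS ?leq_subr //.
  rewrite big_mkcond; apply: eq_bigr => m _.
  by case: ltnP => // hm; rewrite fps_exp_small ?mulr0.
under eq_bigr => i _ do rewrite widen mulr_sumr.
rewrite exchange_big; apply: eq_bigr => m _; rewrite mulr_sumr.
by apply: eq_bigr => i _; rewrite mulrCA.
Qed.

End FormalPowerSeries.

Section BinomialSeries.
Variable R : numFieldType.
Implicit Types (s t : R) (f : fps R).

Lemma fps_1mX_powD s t :
  fps_mul (fps_1mX_pow s) (fps_1mX_pow t) = fps_1mX_pow (s + t).
Proof.
apply: functional_extensionality => n.
by rewrite /fps_1mX_pow opprD; exact: chu_vandermonde.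
Qed.

Lemma fps_1mX_pow0 : fps_1mX_pow 0 = fps_one R.
Proof.
apply: functional_extensionality => -[|n]; rewrite /fps_1mX_pow oppr0.
  by rewrite poch0 divr1.
by rewrite pochSl !mul0r.
Qed.

Lemma fps_1mX_powK s f :
  fps_mul (fps_1mX_pow s) (fps_mul (fps_1mX_pow (- s)) f) = f.
Proof. by rewrite fps_mulA fps_1mX_powD subrr fps_1mX_pow0 fps_mul1. Qed.

Definition quad_arg : fps R :=
  fps_scale (- 4%:R) (fps_mul (fps_X R) (fps_1mX_pow (- 2%:R))).

Lemma fps_exp_quad_arg m :
  fps_exp quad_arg m
  = fps_scale ((- 4%:R) ^+ m) (fps_shift m (fps_1mX_pow (- (2 * m)%N%:R))).
Proof.
elim: m => [|m IH].
  by rewrite /= expr0 fps_scale1 fps_shift0 muln0 oppr0 fps_1mX_pow0.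
rewrite [LHS]/= -/(fps_exp _ m) IH /quad_arg fps_X_shift fps_mul_shiftl fps_mul1.
rewrite fps_mulZl fps_mulZr fps_scaleA fps_mul_shiftl fps_mul_shiftr fps_shiftD.
rewrite fps_1mX_powD exprS add1n; congr (fps_scale _ (fps_shift _ (fps_1mX_pow _))).
by rewrite mulnS natrD; ring.
Qed.

Lemma coef_fps_1mX_pow_comp_quad_arg (F : fps R) a N :
  fps_mul (fps_1mX_pow (- a)) (fps_comp F quad_arg) N
  = \sum_(m < N.+1) F m * ((- 4%:R) ^+ m * poch_frac (a + (2 * m)%N%:R) (N - m)).
Proof.
have quad_arg0 : quad_arg 0%N = 0 by rewrite /quad_arg /fps_scale /fps_mul big_ord1 mul0r mulr0.
rewrite coef_fps_mul_comp //; apply: eq_bigr => m _.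
rewrite fps_exp_quad_arg fps_mulZr fps_mul_shiftr fps_1mX_powD /fps_scale /fps_shift.
by rewrite -ltnS ltn_ord /fps_1mX_pow -opprD opprK.
Qed.

End BinomialSeries.

Theorem theorem1 (C : numClosedFieldType) (k : nat) (a b c : C)
  (hb : forall m : nat, b != - m%:R)
  (hc : forall m : nat, c != - m%:R)
  (hab : forall m : nat, 1 + a - b != - m%:R)
  (hac : forall m : nat, 1 + a - c != - m%:R) :
  fps_comp
    (fps_hyp [:: a / 2%:R; 2%:R^-1 + a / 2%:R; 1 - k%:R + a - b - c]
             [:: 1 + a - b; 1 + a - c])
    (fps_scale (- 4%:R) (fps_mul (@fps_X C) (fps_1mX_pow (- 2%:R))))
  =
  fps_mul (fps_1mX_pow a)
    (fun n => hyp_coef [:: a; b; c] [:: 1 + a - b; 1 + a - c] n * Q2 k n a b c).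
Proof.
rewrite -[LHS](fps_1mX_powK a); congr (fps_mul _ _).
apply: functional_extensionality => N.
by rewrite coef_fps_1mX_pow_comp_quad_arg coef_quad_transform.
Qed.
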